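(* Let $k$ be a positive integer. (1) If $k$ is even, each vertex of $\mathcal F_k$ has at most one predecessor. (2) If $k$ is odd, each vertex of $\mathcal F_k$ has at most two predecessors, and if a vertex $p/q$ has two predecessors $a_1/b_1$ and $a_2/b_2$, then $a_1/b_1$ and $a_2/b_2$ are adjacent in $\mathcal F_k$.
   Context: The vertex set $V$ consists of all reduced fractions $p/q$ with $p,q\in\mathbb Z$, $\gcd(p,q)=1$, together with $1/0$; here $p/q$ and $(-p)/(-q)$ denote the same vertex. For vertices define $d(p/q,a/b)=|pb-qa|$. The graph $\mathcal F_k$ has vertex set $V$, with an edge between $p/q$ and $a/b$ exactly when $d(p/q,a/b)=k$. Write $a/b\prec p/q$ when $a/b$ and $p/q$ are adjacent in $\mathcal F_k$ and $|a|\le|p|$ and $|b|\le|q|$; in that case $a/b$ is called a predecessor of $p/q$. *)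

From Stdlib Require Import ZArith Lia.
Open Scope Z_scope.

(* A vertex of F_k is a pair (p,q) of integers with gcd(p,q) = 1, standing for
   the reduced fraction p/q (1/0 included). (p,q) and (-p,-q) denote the same
   vertex; this identification is expressed by [same_vertex]. *)
Definition vertex (v : Z * Z) : Prop := Z.gcd (fst v) (snd v) = 1.

Definition same_vertex (u v : Z * Z) : Prop :=
  u = v \/ u = (- fst v, - snd v).

Definition dist (u v : Z * Z) : Z := Z.abs (fst u * snd v - snd u * fst v).

Definition adjacent (k : Z) (u v : Z * Z) : Prop := dist u v = k.

Definition predecessor (k : Z) (u v : Z * Z) : Prop :=
  adjacent k u v /\ Z.abs (fst u) <= Z.abs (fst v) /\ Z.abs (snd u) <= Z.abs (snd v).

(* Orient each predecessor [a] of [v] so that [det a v = k].  Two oriented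
   predecessors then have the same determinant against the primitive vector
   [v], so they differ by an integer multiple [t v]; as both lie in the box
   [|x| <= |p|, |y| <= |q|], and [t = ±2] would force [a = -v], we get
   [t ∈ {-1, 0, 1}].  Hence there are at most two predecessors, [b] and
   [b ± v], and [det b (b ± v) = ±k] makes them adjacent.  When [k] is even,
   [b] and [v] are congruent mod 2, so [b ± v] is not primitive and only one
   predecessor remains. *)
From Stdlib Require Import ZArith Lia.
Open Scope Z_scope.

Definition det (u v : Z * Z) : Z := fst u * snd v - snd u * fst v.

Definition neg (u : Z * Z) : Z * Z := (- fst u, - snd u).

Definition shift (u : Z * Z) (t : Z) (v : Z * Z) : Z * Z :=
  (fst u + t * fst v, snd u + t * snd v).

Definition dominated (u v : Z * Z) : Prop :=
  Z.abs (fst u) <= Z.abs (fst v) /\ Z.abs (snd u) <= Z.abs (snd v).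

Definition oriented_predecessor (k : Z) (u v : Z * Z) : Prop :=
  det u v = k /\ dominated u v.

Lemma det_neg_l (u v : Z * Z) : det (neg u) v = - det u v.
Proof. unfold det, neg; simpl; ring. Qed.

Lemma det_neg_r (u v : Z * Z) : det u (neg v) = - det u v.
Proof. unfold det, neg; simpl; ring. Qed.

Lemma det_shift_r (u v : Z * Z) (t : Z) : det u (shift u t v) = t * det u v.
Proof. unfold det, shift; simpl; ring. Qed.

Lemma shift0 (u v : Z * Z) : shift u 0 v = u.
Proof. destruct u; unfold shift; simpl; f_equal; ring. Qed.

Lemma shift_shift (u v : Z * Z) (t s : Z) :
  shift (shift u t v) s v = shift u (t + s) v.
Proof. unfold shift; simpl; f_equal; ring. Qed.

Lemma dist_det (u w : Z * Z) : dist u w = Z.abs (det u w).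
Proof. reflexivity. Qed.

Lemma same_vertex_refl (u : Z * Z) : same_vertex u u.
Proof. now left. Qed.

Lemma same_vertex_sym (u w : Z * Z) : same_vertex u w -> same_vertex w u.
Proof.
  destruct u as [x y], w as [x' y']; unfold same_vertex; simpl.
  intros [E | E]; injection E; intros -> ->; [left | right]; f_equal; ring.
Qed.

Lemma same_vertex_trans (u w z : Z * Z) :
  same_vertex u w -> same_vertex w z -> same_vertex u z.
Proof.
  destruct u as [x y], w as [x' y'], z as [x'' y'']; unfold same_vertex; simpl.
  intros [E | E] [E' | E']; injection E; injection E'; intros -> -> -> ->;
    [left | right | right | left]; f_equal; ring.
Qed.

Lemma same_vertex_through (u w z : Z * Z) :
  same_vertex u z -> same_vertex w z -> same_vertex u w.
Proof. intros uz wz; exact (same_vertex_trans _ _ _ uz (same_vertex_sym _ _ wz)). Qed.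

Lemma same_vertex_vertex (u w : Z * Z) :
  same_vertex u w -> vertex w -> vertex u.
Proof.
  unfold vertex; intros [-> | ->]; simpl; auto.
  now rewrite Z.gcd_opp_l, Z.gcd_opp_r.
Qed.

Lemma dist_same_vertex (u u' w w' : Z * Z) :
  same_vertex u u' -> same_vertex w w' -> dist u w = dist u' w'.
Proof.
  intros [-> | ->] [-> | ->]; change (- fst ?z, - snd ?z) with (neg z);
    rewrite !dist_det, ?det_neg_l, ?det_neg_r, ?Z.abs_opp; reflexivity.
Qed.

Lemma vertex_odd_component (u : Z * Z) :
  vertex u -> Z.even (fst u) = false \/ Z.even (snd u) = false.
Proof.
  unfold vertex; intros g.
  destruct (Z.even (fst u)) eqn:ex, (Z.even (snd u)) eqn:ey; auto; exfalso.
  apply Z.even_spec in ex as [a ha], ey as [b hb].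
  assert (two_div : (2 | Z.gcd (fst u) (snd u)))
    by (apply Z.gcd_greatest; [exists a | exists b]; lia).
  rewrite g in two_div; destruct two_div as [c hc]; lia.
Qed.

(* Modulo 2, two primitive vectors with even determinant coincide. *)
Lemma shift_odd_not_vertex (u v : Z * Z) (t : Z) :
  vertex u -> vertex v -> Z.even (det u v) = true -> Z.even t = false ->
  ~ vertex (shift u t v).
Proof.
  intros gu gv e et gs.
  apply vertex_odd_component in gu, gv, gs.
  unfold det, shift in *; simpl in *.
  rewrite Z.even_sub, !Z.even_mul in e.
  rewrite !Z.even_add, !Z.even_mul, et in gs.
  destruct (Z.even (fst u)), (Z.even (snd u)), (Z.even (fst v)), (Z.even (snd v));
    simpl in *; destruct gu, gv, gs; discriminate.
Qed.

Lemma vertex_nonzero (v : Z * Z) : vertex v -> fst v <> 0 \/ snd v <> 0.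
Proof.
  unfold vertex; destruct v as [p q]; simpl; intros g.
  destruct (Z.eq_dec p 0) as [-> | ]; auto.
  rewrite Z.gcd_0_l in g; lia.
Qed.

Lemma shift_inj (u v : Z * Z) (t s : Z) :
  vertex v -> shift u t v = shift u s v -> t = s.
Proof.
  intros gv E; injection E; intros Ey Ex.
  destruct (vertex_nonzero v gv) as [hp | hq].
  - apply (Z.mul_reg_r _ _ (fst v)); lia.
  - apply (Z.mul_reg_r _ _ (snd v)); lia.
Qed.

(* With Bezout coefficients [a p + b q = 1], the multiplier is [a dx + b dy]. *)
Lemma det_eq_shift (u w v : Z * Z) :
  vertex v -> det u v = det w v -> exists t, w = shift u t v.
Proof.
  destruct u as [x y], w as [x' y'], v as [p q].
  unfold vertex, det, shift; simpl; intros g e.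
  destruct (Z.gcd_bezout p q 1 g) as [a [b hab]].
  exists (a * (x' - x) + b * (y' - y)).
  assert (hd : (y' - y) * p = (x' - x) * q) by lia.
  f_equal.
  - replace ((a * (x' - x) + b * (y' - y)) * p) with ((x' - x) * (a * p + b * q))
      by (transitivity (a * (x' - x) * p + b * ((y' - y) * p)); [rewrite hd | ]; ring).
    rewrite hab; ring.
  - replace ((a * (x' - x) + b * (y' - y)) * q) with ((y' - y) * (a * p + b * q))
      by (transitivity (a * ((x' - x) * q) + b * (y' - y) * q); [rewrite <- hd | ]; ring).
    rewrite hab; ring.
Qed.

Lemma shift_dominated_bound (u v : Z * Z) (t : Z) :
  det u v <> 0 -> dominated u v -> dominated (shift u t v) v -> -1 <= t <= 1.
Proof.
  destruct u as [x y], v as [p q]; unfold det, dominated, shift; simpl.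
  intros hdet [hx hy] [hx' hy'].
  assert (bx : Z.abs t * Z.abs p <= 2 * Z.abs p) by (rewrite <- Z.abs_mul; lia).
  assert (by_ : Z.abs t * Z.abs q <= 2 * Z.abs q) by (rewrite <- Z.abs_mul; lia).
  assert (hv : p <> 0 \/ q <> 0)
    by (destruct (Z.eq_dec p 0) as [-> | ]; [right; intros ->; apply hdet; ring | now left]).
  assert (ht : Z.abs t <= 2) by (destruct hv; nia).
  (* [t = ±2] forces [(x, y) = ∓(p, q)], whose determinant vanishes. *)
  assert (t <> 2 /\ t <> -2) as [h2 hm2].
  { split; intros ->; apply hdet.
    - replace x with (- p) by lia; replace y with (- q) by lia; ring.
    - replace x with p by lia; replace y with q by lia; ring. }
  lia.
Qed.

Lemma predecessor_oriented (k : Z) (a v : Z * Z) :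
  predecessor k a v -> exists b, same_vertex a b /\ oriented_predecessor k b v.
Proof.
  intros [h dom]; unfold adjacent in h; rewrite dist_det in h.
  destruct (Z.le_gt_cases 0 (det a v)).
  - exists a; split; [apply same_vertex_refl | split; [lia | exact dom]].
  - exists (neg a); split.
    + right; destruct a; unfold neg; simpl; f_equal; ring.
    + split; [rewrite det_neg_l; lia | ].
      destruct dom; split; unfold neg; simpl; rewrite Z.abs_opp; assumption.
Qed.

Section Predecessors.

Variables (k : Z) (v : Z * Z).
Hypotheses (hk : 0 < k) (hv : vertex v).

Lemma oriented_predecessor_shift (b b' : Z * Z) :
  oriented_predecessor k b v -> oriented_predecessor k b' v ->
  exists t, -1 <= t <= 1 /\ b' = shift b t v.
Proof.
  intros [db domb] [db' domb'].
  destruct (det_eq_shift b b' v hv) as [t ->]; [congruence | ].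
  exists t; split; [ | reflexivity].
  apply (shift_dominated_bound b v); [lia | assumption | assumption].
Qed.

Lemma predecessor_unique_of_even (a1 a2 : Z * Z) :
  Z.even k = true -> vertex a1 -> vertex a2 ->
  predecessor k a1 v -> predecessor k a2 v -> same_vertex a1 a2.
Proof.
  intros ke g1 g2 p1 p2.
  destruct (predecessor_oriented k a1 v p1) as [b1 [s1 o1]].
  destruct (predecessor_oriented k a2 v p2) as [b2 [s2 o2]].
  destruct (oriented_predecessor_shift b1 b2 o1 o2) as [t [ht ->]].
  destruct (Z.eq_dec t 0) as [-> | t_nz].
  - rewrite shift0 in s2; exact (same_vertex_through _ _ _ s1 s2).
  - exfalso.
    apply (shift_odd_not_vertex b1 v t).
    + exact (same_vertex_vertex _ _ (same_vertex_sym _ _ s1) g1).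
    + exact hv.
    + destruct o1 as [-> _]; exact ke.
    + assert (t = 1 \/ t = -1) as [-> | ->] by lia; reflexivity.
    + exact (same_vertex_vertex _ _ (same_vertex_sym _ _ s2) g2).
Qed.

Lemma predecessors_adjacent (a1 a2 : Z * Z) :
  predecessor k a1 v -> predecessor k a2 v -> ~ same_vertex a1 a2 ->
  adjacent k a1 a2.
Proof.
  intros p1 p2 ns.
  destruct (predecessor_oriented k a1 v p1) as [b1 [s1 o1]].
  destruct (predecessor_oriented k a2 v p2) as [b2 [s2 o2]].
  destruct (oriented_predecessor_shift b1 b2 o1 o2) as [t [ht ->]].
  destruct (Z.eq_dec t 0) as [-> | t_nz].
  - rewrite shift0 in s2; contradiction (ns (same_vertex_through _ _ _ s1 s2)).
  - unfold adjacent; rewrite (dist_same_vertex _ _ _ _ s1 s2), dist_det, det_shift_r.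
    destruct o1 as [-> _].
    assert (t = 1 \/ t = -1) as [-> | ->] by lia; lia.
Qed.

Lemma predecessors_at_most_two (a1 a2 a3 : Z * Z) :
  predecessor k a1 v -> predecessor k a2 v -> predecessor k a3 v ->
  same_vertex a1 a2 \/ same_vertex a1 a3 \/ same_vertex a2 a3.
Proof.
  intros p1 p2 p3.
  destruct (predecessor_oriented k a1 v p1) as [b1 [s1 o1]].
  destruct (predecessor_oriented k a2 v p2) as [b2 [s2 o2]].
  destruct (predecessor_oriented k a3 v p3) as [b3 [s3 o3]].
  destruct (oriented_predecessor_shift b1 b2 o1 o2) as [t2 [ht2 E2]].
  destruct (oriented_predecessor_shift b1 b3 o1 o3) as [t3 [ht3 E3]].
  destruct (oriented_predecessor_shift b2 b3 o2 o3) as [s [hs E]].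
  assert (t3 = t2 + s).
  { apply (shift_inj b1 v); [exact hv | ].
    now rewrite <- E3, E, E2, shift_shift. }
  (* [0], [t2] and [t3] pairwise differ by at most 1, so two of them coincide. *)
  assert (t2 = 0 \/ t3 = 0 \/ t2 = t3) as [-> | [-> | <-]] by lia.
  - left; rewrite E2, shift0 in s2; exact (same_vertex_through _ _ _ s1 s2).
  - right; left; rewrite E3, shift0 in s3; exact (same_vertex_through _ _ _ s1 s3).
  - right; right; rewrite <- E2 in E3; rewrite E3 in s3.
    exact (same_vertex_through _ _ _ s2 s3).
Qed.

End Predecessors.

Theorem lemma4p6 (k : Z) (hk : 0 < k) :
  (Z.Even k ->
     forall v a1 a2 : Z * Z,
       vertex v -> vertex a1 -> vertex a2 ->
       predecessor k a1 v -> predecessor k a2 v -> same_vertex a1 a2) /\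
  (Z.Odd k ->
     (forall v a1 a2 a3 : Z * Z,
        vertex v -> vertex a1 -> vertex a2 -> vertex a3 ->
        predecessor k a1 v -> predecessor k a2 v -> predecessor k a3 v ->
        same_vertex a1 a2 \/ same_vertex a1 a3 \/ same_vertex a2 a3) /\
     (forall v a1 a2 : Z * Z,
        vertex v -> vertex a1 -> vertex a2 ->
        predecessor k a1 v -> predecessor k a2 v -> ~ same_vertex a1 a2 ->
        adjacent k a1 a2)).
Proof.
  split.
  - intros ke v a1 a2 gv; apply Z.even_spec in ke.
    exact (predecessor_unique_of_even k v hk gv a1 a2 ke).
  (* The odd-[k] assertions hold for every [k > 0]. *)
  - intros _; split.
    + intros v a1 a2 a3 gv _ _ _; exact (predecessors_at_most_two k v hk gv a1 a2 a3).
    + intros v a1 a2 gv _ _; exact (predecessors_adjacent k v hk gv a1 a2).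
Qed.
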